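(* Let $p\geq2$, $n_1,\dots,n_l\geq1$ be integers with $\sum_j p^{-n_j}=1$ and let $T_p$ be the map satisfying Condition 1 with slopes $\Lambda_j=p^{n_j}$. Let $U_\Bbbk$ be a quantization of $T_p$ with respect to the partition of $[0,1]$ into $N_\Bbbk=p^\Bbbk$ equal intervals, let $\psi_\Bbbk$ be a normalized eigenvector of $U_\Bbbk$ and $\mu_\Bbbk$ the associated measure. Let $n_{\mathrm E}=\lfloor\log N_\Bbbk/\log\Lambda_{\max}\rfloor$ and write $n_{\mathrm E}=qn+r$ with integers $q,n\geq1$, $0\leq r<n$. Then $$p_{n_{\mathrm E},v}(\mu_\Bbbk)\leq q\,p_{n,v}(\mu_\Bbbk)+p_{r,v}(\mu_\Bbbk).$$
   Context: Condition 1: $[0,1]$ is divided into consecutive intervals $I_1,\dots,I_l$ with $|I_j|=\Lambda_j^{-1}$ and $T_p$ is affine with slope $\Lambda_j$ on $I_j$ mapping $I_j$ onto $[0,1]$. Let $E_i=[(i-1)/N_\Bbbk,i/N_\Bbbk]$ and $B(i,j)=|E_i\cap T_p^{-1}E_j|/|E_i|$; a quantization is a unitary $U_\Bbbk$ with $B(j,i)=|U_\Bbbk(i,j)|^2$. $\mathrm{Op}_\Bbbk(f)$ is the diagonal matrix with $(i,i)$ entry $N_\Bbbk\int_{E_i}f\,dx$, and $\mu_\Bbbk$ is the probability measure with $\int f\,d\mu_\Bbbk=\langle\psi_\Bbbk,\mathrm{Op}_\Bbbk(f)\psi_\Bbbk\rangle$. For a word $\varepsilon=\varepsilon_0\dots\varepsilon_{n-1}\in\{1,\dots,l\}^n$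 let $[\![\varepsilon]\!]=\bigcap_{i=0}^{n-1}T_p^{-i}I_{\varepsilon_i}$ and $v_\varepsilon=\prod_{i=0}^{n-1}\Lambda_{\varepsilon_i}^{-1/2}$. For a measure $\nu$, the pressure is $p_{n,v}(\nu)=-\sum_{|\varepsilon|=n}\nu([\![\varepsilon]\!])\log\big(v_\varepsilon^2\,\nu([\![\varepsilon]\!])\big)$ (with $0\log0=0$; for $n=0$ it is $0$). *)

From mathcomp Require Import all_boot all_order all_algebra.
From mathcomp Require Import all_classical all_reals all_analysis.
From mathcomp Require Import complex.
Import Order.TTheory GRing.Theory Num.Theory.

Set Implicit Arguments.
Unset Strict Implicit.
Unset Printing Implicit Defensive.

Local Open Scope classical_set_scope.
Local Open Scope ring_scope.

(* Indices are 0-based: the branches are j : 'I_l, the cells i : 'I_N. *)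

Definition Lam {R : realType} (p l : nat) (nn : 'I_l -> nat) (j : 'I_l) : R :=
  (p ^ nn j)%:R.

Definition aL {R : realType} (p l : nat) (nn : 'I_l -> nat) (j : 'I_l) : R :=
  \sum_(m < l | (m < j)%N) (Lam p nn m)^-1.

(* the consecutive intervals I_j of length Lambda_j^{-1}, starting at 0;
   half-open [a_j, a_j + Lambda_j^-1), the last one closed, so that they
   partition [0,1] *)
Definition Iint {R : realType} (p l : nat) (nn : 'I_l -> nat) (j : 'I_l) : set R :=
  if (j.+1 == l)%N then
    [set x | aL p nn j <= x <= aL p nn j + (Lam p nn j)^-1]
  else [set x | aL p nn j <= x < aL p nn j + (Lam p nn j)^-1].

(* the map T_p of Condition 1: affine with slope Lambda_j on I_j, mapping I_j
   onto [0,1] (it is 0 outside [0,1], which is irrelevant) *)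
Definition Tp {R : realType} (p l : nat) (nn : 'I_l -> nat) (x : R) : R :=
  \sum_(j < l) (\1_(Iint p nn j) x) * (Lam p nn j * (x - aL p nn j)).

(* E_i = [i/N, (i+1)/N] (0-based version of [(i-1)/N, i/N]) *)
Definition Ecell {R : realType} (N : nat) (i : 'I_N) : set R :=
  [set x | i%:R / N%:R <= x <= i.+1%:R / N%:R].

Definition Bmat {R : realType} (p l : nat) (nn : 'I_l -> nat) (N : nat)
  (i j : 'I_N) : R :=
  fine (@lebesgue_measure R (Ecell i `&` (Tp p nn @^-1` Ecell j)))
  / fine (@lebesgue_measure R (Ecell i)).

Definition adjmx {R : realType} (N : nat) (U : 'M[R[i]]_N) : 'M[R[i]]_N :=
  \matrix_(i, j) ((U j i)^*)%C.

Definition unitary {R : realType} (N : nat) (U : 'M[R[i]]_N) : Prop :=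
  adjmx U *m U = 1%:M /\ U *m adjmx U = 1%:M.

Definition quantization {R : realType} (p l : nat) (nn : 'I_l -> nat) (N : nat)
  (U : 'M[R[i]]_N) : Prop :=
  unitary U /\ forall i j : 'I_N, `|U i j| ^+ 2 = (Bmat p nn j i)%:C%C.

Definition Op {R : realType} (N : nat) (f : R -> R) : 'M[R[i]]_N :=
  \matrix_(i, j) (if i == j then
                    ((N%:R * Rintegral (@lebesgue_measure R) (Ecell i) f)%:C)%C
                  else 0).

Definition inner_op {R : realType} (N : nat) (psi : 'cV[R[i]]_N)
  (A : 'M[R[i]]_N) : R[i] :=
  \sum_(i < N) ((psi i 0)^*)%C * (A *m psi) i 0.

Definition mu_psi {R : realType} (N : nat) (psi : 'cV[R[i]]_N) (A : set R) : R :=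
  complex.Re (inner_op psi (Op N (\1_A : R -> R))).

Definition cyl {R : realType} (p l : nat) (nn : 'I_l -> nat) (n : nat)
  (e : n.-tuple 'I_l) : set R :=
  [set x | forall i : 'I_n, Iint p nn (tnth e i) (iter i (Tp p nn) x)].

Definition veps {R : realType} (p l : nat) (nn : 'I_l -> nat) (n : nat)
  (e : n.-tuple 'I_l) : R :=
  \prod_(i < n) (Num.sqrt (Lam p nn (tnth e i)))^-1.

(* pressure p_{n,v}(nu); 0 log 0 = 0 holds since the factor nu(..) is 0 *)
Definition pressure {R : realType} (p l : nat) (nn : 'I_l -> nat)
  (nu : set R -> R) (n : nat) : R :=
  if n == 0%N then 0 else
  - \sum_(e : n.-tuple 'I_l)
      nu (cyl p nn e) * ln (veps p nn e ^+ 2 * nu (cyl p nn e)).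

Definition Lmax (p l : nat) (nn : 'I_l -> nat) : nat := \max_(j < l) (p ^ nn j).

From mathcomp Require Import all_boot all_order all_algebra.
From mathcomp Require Import all_classical all_reals all_analysis.
From mathcomp Require Import complex.
From mathcomp Require Import zify ring lra.
Import Order.TTheory GRing.Theory Num.Theory.
Local Open Scope classical_set_scope.
Local Open Scope ring_scope.

Set Implicit Arguments.
Unset Strict Implicit.
Unset Printing Implicit Defensive.

(* Because all slopes are powers of [p] and [n_E * max_j n_j <= k], every
   cylinder of length [m <= n_E] is, up to finitely many points, a union of
   cells [E_i].  Hence the masses [mu_k([[eps]])] of such cylinders form a
   consistent family of weights on words (summing over a last letter gives the
   shorter word).  Since [|U(i,j)|^2 = B(j,i)], the unitary [U_k] only connects
   [E_j] to the cells covered by [T_p(E_j)], so the eigenvector equation makes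
   the family also stationary (summing over a first letter gives the shorter
   word).  For a consistent stationary family the pressure is subadditive, by
   the Gibbs inequality [ln t <= t - 1], and [q]-fold subadditivity is the
   claim. *)


Section WordSums.
Variables (T : finType) (V : nmodType).

Definition sum_words (m : nat) (f : seq T -> V) : V := \sum_(e : m.-tuple T) f e.

Lemma sum_words0 f : sum_words 0 f = f [::].
Proof.
rewrite /sum_words (big_pred1 (nil_tuple T)) // => e.
by rewrite /= [e]tuple0 eqxx.
Qed.

Lemma sum_wordsS m f :
  sum_words m.+1 f = \sum_(a : T) sum_words m (fun s => f (a :: s)).
Proof.
rewrite /sum_words pair_big /=.
rewrite (reindex (fun t : m.+1.-tuple T => (thead t, [tuple of behead t]))) /=.
  by apply: eq_bigr => t _; rewrite {1}(tuple_eta t).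
apply: onW_bij; exists (fun q : T * m.-tuple T => [tuple of q.1 :: q.2]) => /=.
  by move=> t; rewrite /= -tuple_eta.
by move=> [a t] /=; rewrite /thead tnth0; congr pair; apply: val_inj.
Qed.

Lemma sum_words_cat m1 m2 f :
  sum_words (m1 + m2) f = sum_words m1 (fun s1 => sum_words m2 (fun s2 => f (s1 ++ s2))).
Proof.
elim: m1 f => [|m1 IH] f; first by rewrite sum_words0.
by rewrite addSn !sum_wordsS; apply: eq_bigr => c _; apply: IH.
Qed.

End WordSums.

Lemma ln_le_subr1 (R : realType) (t : R) : 0 < t -> ln t <= t - 1.
Proof.
by move=> t0; have := @le_ln1Dx R (t - 1); rewrite addrCA subrr addr0; apply; lra.
Qed.

(* [ln t <= t - 1] at [t = r1 r2 / q], multiplied by [q]. *)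
Lemma ln_joint_le (R : realType) (c1 c2 r1 r2 q : R) :
  0 < c1 -> 0 < c2 -> 0 <= q -> q <= r1 -> q <= r2 ->
  q * ln (c1 * r1) + q * ln (c2 * r2) + q - r1 * r2 <= q * ln (c1 * c2 * q).
Proof.
move=> c1_gt0 c2_gt0; rewrite le_eqVlt => /orP[/eqP <- | q_gt0] q_r1 q_r2.
  by rewrite !mul0r !add0r oppr_le0 mulr_ge0.
have [r1_gt0 r2_gt0] : 0 < r1 /\ 0 < r2 by split; lra.
have := ln_le_subr1 (divr_gt0 (mulr_gt0 r1_gt0 r2_gt0) q_gt0).
rewrite !lnM ?posrE ?mulr_gt0 ?invr_gt0 // lnV ?posrE // => ln_le.
have : q * (ln r1 + ln r2 - ln q) <= r1 * r2 - q.
  have -> : r1 * r2 - q = q * (r1 * r2 / q - 1) by field; rewrite gt_eqF.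
  by rewrite ler_pM2l.
rewrite !mulrDr mulrN; lra.
Qed.

Section WordPressure.
Variables (R : realType) (T : finType) (rho v : seq T -> R).
Hypotheses (rho_ge0 : forall s, 0 <= rho s) (v_gt0 : forall s, 0 < v s).
Hypothesis v_cat : forall s1 s2, v (s1 ++ s2) = v s1 * v s2.
Hypothesis rho_nil : rho [::] = 1.
Hypothesis rho_extr : forall s m, sum_words m (fun e => rho (s ++ e)) = rho s.

Definition word_pressure m := - sum_words m (fun s => rho s * ln (v s ^+ 2 * rho s)).

Lemma sum_words_rho m : sum_words m rho = 1.
Proof. by rewrite -rho_nil -(rho_extr [::] m). Qed.

Lemma word_pressure0 : word_pressure 0 = 0.
Proof.
have v_nil : v [::] = 1.
  by apply/(mulfI (lt0r_neq0 (v_gt0 [::]))); rewrite mulr1 -v_cat.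
by rewrite /word_pressure sum_words0 v_nil rho_nil expr1n !mul1r ln1 oppr0.
Qed.

Lemma word_pressureD a b :
  (forall s : b.-tuple T, sum_words a (fun e => rho (e ++ s)) = rho s) ->
  word_pressure (a + b)%N <= word_pressure a + word_pressure b.
Proof.
move=> rho_extl.
pose L s := rho s * ln (v s ^+ 2 * rho s).
have rho_le_sum m (s : m.-tuple T) (f : seq T -> R) :
    (forall s, 0 <= f s) -> f s <= sum_words m f.
  by move=> f_ge0; rewrite /sum_words (bigD1 s) //= lerDl sumr_ge0.
pose G s1 s2 := rho (s1 ++ s2) * ln (v s1 ^+ 2 * rho s1) +
  rho (s1 ++ s2) * ln (v s2 ^+ 2 * rho s2) + rho (s1 ++ s2) - rho s1 * rho s2.
have G_le : sum_words a (fun s1 => sum_words b (G s1)) <=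
            sum_words a (fun s1 => sum_words b (fun s2 => L (s1 ++ s2))).
  apply: ler_sum => s1 _; apply: ler_sum => s2 _.
  rewrite /G /L v_cat exprMn; apply: ln_joint_le; rewrite ?exprn_gt0 //.
    by rewrite -(rho_extr s1 b); apply: (rho_le_sum _ s2 (fun e => rho (s1 ++ e))).
  by rewrite -(rho_extl s2); apply: (rho_le_sum _ s1 (fun e => rho (e ++ s2))).
have sum_G : sum_words a (fun s1 => sum_words b (G s1)) =
             sum_words a L + sum_words b L.
  rewrite /G /sum_words.
  under eq_bigr do rewrite !big_split /= sumrN.
  rewrite !big_split /= sumrN.
  have -> : \sum_(s1 : a.-tuple T) \sum_(s2 : b.-tuple T)
      rho (s1 ++ s2) * ln (v s1 ^+ 2 * rho s1) = sum_words a L.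
    by apply: eq_bigr => s1 _; rewrite -mulr_suml [X in X * _]rho_extr.
  have -> : \sum_(s1 : a.-tuple T) \sum_(s2 : b.-tuple T)
      rho (s1 ++ s2) * ln (v s2 ^+ 2 * rho s2) = sum_words b L.
    rewrite exchange_big; apply: eq_bigr => s2 _.
    by rewrite -mulr_suml [X in X * _]rho_extl.
  have -> : \sum_(s1 : a.-tuple T) \sum_(s2 : b.-tuple T) rho (s1 ++ s2) = 1.
    by rewrite -(sum_words_rho a); apply: eq_bigr => s1 _; apply: rho_extr.
  have -> : \sum_(s1 : a.-tuple T) \sum_(s2 : b.-tuple T) rho s1 * rho s2 = 1.
    rewrite -[RHS](mulr1 1) -{1}(sum_words_rho a) -(sum_words_rho b) /sum_words mulr_suml.
    by apply: eq_bigr => s1 _; rewrite mulr_sumr.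
  by rewrite addrK.
rewrite sum_G in G_le; rewrite /word_pressure sum_words_cat; lra.
Qed.

End WordPressure.

Lemma subadditive_le (R : numDomainType) (F : nat -> R) (N : nat) :
  (forall a b, (a + b <= N)%N -> F (a + b)%N <= F a + F b) ->
  forall q n r, (q * n + r <= N)%N -> F (q * n + r)%N <= q%:R * F n + F r.
Proof.
move=> F_subadd; elim=> [|q IH] n r qnr_le; first by rewrite mul0r add0r.
rewrite mulSn -addnA in qnr_le *.
apply: le_trans (F_subadd _ _ qnr_le) _.
rewrite mulrS mulrDl mul1r -addrA lerD2l.
by apply: IH; apply: leq_trans qnr_le; apply: leq_addl.
Qed.

Lemma lebesgue_measure_between (R : realType) (a b : R) (B : set R) :
  a < b -> `[a, b[ `<=` B -> B `<=` `[a, b] ->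
  measurable B /\ lebesgue_measure B = (b - a)%:E.
Proof.
move=> ab aB_B B_ab; have [Bb|nBb] := pselect (B b).
  have -> : B = [set` `[a, b]].
    apply/seteqP; split => // x /=; rewrite in_itv /= => /andP[ax].
    rewrite le_eqVlt => /orP[/eqP-> //|xb].
    by apply: aB_B; rewrite /= in_itv /= ax xb.
  by rewrite lebesgue_measure_itv /= lte_fin ab; split; first apply: measurable_itv.
have -> : B = [set` `[a, b[].
  apply/seteqP; split => // x Bx.
  have := B_ab _ Bx; rewrite /= !in_itv /= => /andP[-> xb].
  by move: xb; rewrite le_eqVlt => /orP[/eqP xb|->//]; move: nBb; rewrite -xb.
by rewrite lebesgue_measure_itv /= lte_fin ab; split; first apply: measurable_itv.
Qed.

Lemma lebesgue_measure_sub_set1 (R : realType) (b : R) (B : set R) :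
  B `<=` [set b] -> measurable B /\ lebesgue_measure B = 0%E.
Proof.
move=> Bb; split; last first.
  exact/countable_lebesgue_measure0/finite_set_countable/(sub_finite_set Bb).
have [Bb'|nBb] := pselect (B b).
  by have -> : B = [set b] by apply/seteqP; split => // x /= ->.
by have -> : B = set0 by apply/seteqP; split => // x Bx; move: nBb; rewrite -(Bb _ Bx).
Qed.

Lemma nat_block_cmp (R : numDomainType) (P m n : nat) (X : R) : (0 < P)%N ->
  (m * P)%:R <= X -> X < (m.+1 * P)%:R ->
  ((n * P)%:R <= X <-> (n <= m)%N) /\ (X < (n * P)%:R <-> (m < n)%N).
Proof.
move=> P_gt0 mX Xm; split; split => h.
- by rewrite -ltnS -(ltn_pmul2r P_gt0) -(ltr_nat R); apply: le_lt_trans Xm.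
- by apply: le_trans mX; rewrite ler_nat leq_mul.
- by rewrite -(ltn_pmul2r P_gt0) -(ltr_nat R); apply: le_lt_trans mX h.
- by apply: lt_le_trans Xm _; rewrite ler_nat leq_mul.
Qed.

Definition normsq (R : realType) n (f : 'I_n -> R[i]) : R[i] :=
  \sum_i conjc (f i) * f i.

Lemma normsq_unitary (R : realType) n (U : 'M[R[i]]_n) (f : 'I_n -> R[i]) :
  adjmx U *m U = 1%:M -> normsq (fun i => \sum_j U i j * f j) = normsq f.
Proof.
move=> UU; rewrite /normsq.
have UUE j m : \sum_i conjc (U i j) * U i m = (j == m)%:R.
  by have := congr1 (fun M : 'M[R[i]]_n => M j m) UU; rewrite !mxE => <-;
    apply: eq_bigr => i _; rewrite mxE.
transitivity (\sum_j \sum_m conjc (f j) * f m * (j == m)%:R).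
  under eq_bigr do rewrite rmorph_sum mulr_suml; rewrite exchange_big.
  apply: eq_bigr => j _; under eq_bigr do rewrite mulr_sumr; rewrite exchange_big.
  apply: eq_bigr => m _; rewrite -UUE mulr_sumr.
  by apply: eq_bigr => i _; rewrite rmorphM; ring.
apply: eq_bigr => j _; rewrite (bigD1 j) //= eqxx mulr1 big1 ?addr0 // => m.
by rewrite eq_sym => /negbTE ->; rewrite mulr0.
Qed.

Lemma normsqZ (R : realType) n (c : R[i]) (f : 'I_n -> R[i]) :
  normsq (fun i => c * f i) = conjc c * c * normsq f.
Proof. by rewrite /normsq mulr_sumr; apply: eq_bigr => i _; rewrite rmorphM; ring. Qed.

Lemma eigenvalue_unimodular (R : realType) n (U : 'M[R[i]]_n) (psi : 'cV[R[i]]_n) lam :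
  adjmx U *m U = 1%:M -> U *m psi = lam *: psi -> normsq (fun i => psi i 0) = 1 ->
  conjc lam * lam = 1.
Proof.
move=> UU psi_eig psi_norm.
rewrite -[LHS]mulr1 -{1}psi_norm -normsqZ -psi_norm -[RHS](normsq_unitary _ UU).
apply: eq_bigr => i _.
by have := congr1 (fun M : 'cV[R[i]]_n => M i 0) psi_eig; rewrite !mxE => ->.
Qed.

Section Grid.
Variables (R : realType) (p l : nat) (nn : 'I_l -> nat) (k : nat).
Hypothesis p_ge2 : (2 <= p)%N.
Hypothesis sum_p_nn : \sum_(j < l) ((p%:R : R) ^- nn j) = 1.

Definition nmax : nat := \max_(j < l) nn j.
Hypothesis nmax_le_k : (nmax <= k)%N.

Local Notation Nk := (p ^ k)%N.

Lemma expp_gt0 m : (0 < p ^ m)%N.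
Proof. by rewrite expn_gt0; lia. Qed.

Lemma Nk_gt0 : 0 < Nk%:R :> R.
Proof. by rewrite ltr0n expp_gt0. Qed.

Lemma nn_le_nmax j : (nn j <= nmax)%N.
Proof. exact: leq_bigmax. Qed.

Lemma nn_le_k j : (nn j <= k)%N.
Proof. exact: leq_trans (nn_le_nmax j) nmax_le_k. Qed.

Lemma Lam_grid j : (Lam p nn j)^-1 = (p ^ (k - nn j))%:R / Nk%:R :> R.
Proof.
rewrite /Lam -{2}(subnK (nn_le_k j)) expnD natrM invfM mulrA mulfV ?mul1r //.
by rewrite pnatr_eq0 -lt0n expp_gt0.
Qed.

(* In units of [1/Nk], the interval [I_t] starts at [branch_start t]. *)
Definition branch_start (t : nat) : nat := \sum_(m < l | (m < t)%N) p ^ (k - nn m).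

Definition in_branch (a : 'I_l) (j : nat) : bool :=
  (branch_start a <= j < branch_start a.+1)%N.

Lemma branch_start_mono t1 t2 : (t1 <= t2)%N -> (branch_start t1 <= branch_start t2)%N.
Proof.
move=> t12; rewrite /branch_start big_mkcond [X in (_ <= X)%N]big_mkcond /=.
by apply: leq_sum => m _; case: ifP => // m_t1; rewrite (leq_trans m_t1 t12).
Qed.

Lemma branch_startS (a : 'I_l) : branch_start a.+1 = (branch_start a + p ^ (k - nn a))%N.
Proof.
rewrite /branch_start (bigD1 a) //= addnC; congr (_ + _)%N.
by apply: eq_bigl => m; rewrite ltnS ltn_neqAle andbC.
Qed.

Lemma branch_start0 : branch_start 0 = 0%N.
Proof. by rewrite /branch_start big_pred0. Qed.

Lemma branch_start_l : branch_start l = Nk.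
Proof.
apply/eqP; rewrite -(eqr_nat R); apply/eqP.
rewrite /branch_start (eq_bigl xpredT) => [|m]; last by rewrite ltn_ord.
rewrite natr_sum; transitivity (\sum_(j < l) (p%:R : R) ^- nn j * Nk%:R).
  by apply: eq_bigr => j _; rewrite -natrX Lam_grid divfK // gt_eqF // Nk_gt0.
by rewrite -mulr_suml sum_p_nn mul1r.
Qed.

Lemma aL_grid j : aL p nn j = (branch_start j)%:R / Nk%:R :> R.
Proof.
by rewrite /aL /branch_start natr_sum mulr_suml; apply: eq_bigr => m _; apply: Lam_grid.
Qed.

Lemma aL_Lam_grid (j : 'I_l) :
  aL p nn j + (Lam p nn j)^-1 = (branch_start j.+1)%:R / Nk%:R :> R.
Proof. by rewrite aL_grid Lam_grid branch_startS natrD mulrDl. Qed.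

Lemma IintE (j : 'I_l) (x : R) :
  Iint p nn j x <->
  (branch_start j)%:R / Nk%:R <= x /\
  (x < (branch_start j.+1)%:R / Nk%:R \/
   (j.+1 == l)%N /\ x = (branch_start j.+1)%:R / Nk%:R).
Proof.
rewrite /Iint -aL_grid -aL_Lam_grid; case: ifP => j_last /=; split.
- move=> /andP[jx]; rewrite le_eqVlt => /orP[/eqP xj|xj]; split=> //; by [right|left].
- by case=> jx [xj|[_ xe]]; apply/andP; split => //; [apply: ltW | rewrite xe].
- by move=> /andP[-> ->]; split => //; left.
- by case=> jx [xj|[]] //; apply/andP.
Qed.

Lemma Iint_uniq (a b : 'I_l) (x : R) : Iint p nn a x -> Iint p nn b x -> a = b.
Proof.
wlog ab : a b / (a <= b)%N.
  move=> H Ia Ib; case: (leqP a b) => [ab|/ltnW ba]; first exact: H.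
  by apply/esym/H.
move=> /IintE[_ xa] /IintE[bx _]; apply/val_inj/eqP; rewrite eqn_leq ab /= leqNgt.
apply/negP => a_lt_b.
have a_last : (a.+1 == l) = false by apply/negbTE; have := ltn_ord b; lia.
have : x < (branch_start a.+1)%:R / Nk%:R by case: xa => // -[]; rewrite a_last.
have : (branch_start a.+1)%:R / Nk%:R <= (branch_start b)%:R / Nk%:R :> R.
  by rewrite ler_pM2r ?invr_gt0 ?Nk_gt0 // ler_nat branch_start_mono.
lra.
Qed.

Lemma Tp_Iint (a : 'I_l) (x : R) :
  Iint p nn a x -> Tp p nn x = Lam p nn a * (x - aL p nn a).
Proof.
move=> Ia; rewrite /Tp (bigD1 a) //= big1 ?addr0 => [|b ba].
  by rewrite indicE mem_set // mul1r.
by rewrite indicE memNset ?mul0r // => Ib; move/eqP: ba; apply; apply: Iint_uniq Ib Ia.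
Qed.

Lemma Tp_grid (a : 'I_l) (x : R) : Iint p nn a x ->
  Tp p nn x * Nk%:R = (p ^ nn a)%:R * (x * Nk%:R - (branch_start a)%:R).
Proof.
by move=> /Tp_Iint ->; rewrite aL_grid /Lam; field; rewrite gt_eqF // Nk_gt0.
Qed.

Lemma in_branch_ex j : (j < Nk)%N -> exists a : 'I_l, in_branch a j.
Proof.
move=> j_lt; have ex_t : exists t, (j < branch_start t)%N.
  by exists l; rewrite branch_start_l.
case: (ex_minnP ex_t) => t j_lt_t t_min.
have t_gt0 : (0 < t)%N by case: t j_lt_t {t_min} => //; rewrite branch_start0.
have t_le_l : (t <= l)%N by apply: t_min; rewrite branch_start_l.
have t1_lt_l : (t.-1 < l)%N by lia.
exists (Ordinal t1_lt_l); rewrite /in_branch /= prednK // j_lt_t andbT leqNgt.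
by apply/negP => /t_min; lia.
Qed.

Lemma in_branch_uniq (a b : 'I_l) j : in_branch a j -> in_branch b j -> a = b.
Proof.
wlog ab : a b / (a <= b)%N.
  move=> H Ia Ib; case: (leqP a b) => [ab|/ltnW ba]; first exact: H.
  by apply/esym/H.
move=> /andP[_ ja] /andP[bj _]; apply/val_inj/eqP; rewrite eqn_leq ab /= leqNgt.
by apply/negP => /branch_start_mono; lia.
Qed.

Lemma in_branch_image_lt (a : 'I_l) j :
  in_branch a j -> ((j - branch_start a) * p ^ nn a < Nk)%N.
Proof.
move=> /andP[_]; rewrite branch_startS => j_lt.
by rewrite -(subnK (nn_le_k a)) expnD ltn_pmul2r ?expp_gt0 //; lia.
Qed.

(* [cell_cyl s j]: the cell [E_j] lies in the cylinder of the word [s].  On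
   a branch [a], [T_p] maps [E_j] onto the [p ^ nn a] cells starting at
   index [(j - branch_start a) * p ^ nn a]; for [size s * nmax <= k] the
   first of them decides the remaining letters (see [cylw_cell]). *)
Fixpoint cell_cyl (s : seq 'I_l) (j : nat) : bool :=
  match s with
  | [::] => (j < Nk)%N
  | a :: s' => in_branch a j && cell_cyl s' ((j - branch_start a) * p ^ nn a)
  end.

Lemma cell_cyl_lt s j : cell_cyl s j -> (j < Nk)%N.
Proof.
case: s => //= a s /andP[/andP[_ j_lt] _]; apply: leq_trans j_lt _.
by rewrite -branch_start_l branch_start_mono.
Qed.

Lemma sum_in_branch j : \sum_(a < l) (in_branch a j)%:R = (j < Nk)%N%:R :> R.
Proof.
have [j_lt|j_ge] := boolP (j < Nk)%N.
  have [a ja] := in_branch_ex j_lt.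
  rewrite (bigD1 a) //= ja big1 ?addr0 // => b ba.
  case: (boolP (in_branch b j)) => // jb.
  by move/eqP: ba; case; apply: in_branch_uniq jb ja.
rewrite big1 // => a _; case: (boolP (in_branch a j)) => // ja.
by move: j_ge; rewrite (@cell_cyl_lt [:: a]) //= ja in_branch_image_lt.
Qed.

Lemma sum_cell_cyl_cat m s j :
  sum_words m (fun e => (cell_cyl (s ++ e) j)%:R) = (cell_cyl s j)%:R :> R.
Proof.
elim: s j => [|a s IH] j /=; last first.
  rewrite /sum_words; under eq_bigr do rewrite -mulnb natrM.
  rewrite -mulr_sumr; move: (IH ((j - branch_start a) * p ^ nn a)%N).
  by rewrite /sum_words => ->; rewrite -natrM mulnb.
elim: m j => [|m IH] j; first by rewrite sum_words0.
rewrite sum_wordsS -sum_in_branch; apply: eq_bigr => a _ /=.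
rewrite /sum_words; under eq_bigr do rewrite -mulnb natrM.
rewrite -mulr_sumr; move: (IH ((j - branch_start a) * p ^ nn a)%N).
rewrite /sum_words => ->.
case: (boolP (in_branch a j)) => ja; last by rewrite !mul0r.
by rewrite in_branch_image_lt // mulr1.
Qed.

Fixpoint cylw (s : seq 'I_l) : set R :=
  match s with
  | [::] => setT
  | a :: s' => [set x | Iint p nn a x /\ cylw s' (Tp p nn x)]
  end.

Definition in_block (g u : nat) (x : R) : bool :=
  ((u * p ^ g)%:R <= x * Nk%:R) && (x * Nk%:R < (u.+1 * p ^ g)%:R).

Lemma dvdn_branch_start g t : (g + nmax <= k)%N -> (p ^ g %| branch_start t)%N.
Proof.
move=> g_le; apply: dvdn_sum => m _; apply: dvdn_exp2l.
by have := nn_le_nmax m; lia.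
Qed.

Lemma Iint_block (a : 'I_l) g u x : (g + nmax <= k)%N -> (u.+1 * p ^ g <= Nk)%N ->
  in_block g u x -> Iint p nn a x <-> in_branch a (u * p ^ g).
Proof.
move=> g_le u_le /andP[ux xu]; have pg_gt0 := expp_gt0 g.
have [ta ta_E] := dvdnP (dvdn_branch_start a g_le).
have [tb tb_E] := dvdnP (dvdn_branch_start a.+1 g_le).
have [ta_le _] := nat_block_cmp ta pg_gt0 ux xu.
have [_ tb_lt] := nat_block_cmp tb pg_gt0 ux xu.
rewrite IintE /in_branch ta_E tb_E leq_pmul2r // ltn_pmul2r //.
rewrite ler_pdivrMr ?Nk_gt0 // ltr_pdivlMr ?Nk_gt0 // ta_le tb_lt.
split; last by move=> /andP[-> ->]; split => //; left.
case=> -> [-> // | [/eqP a_last x_end]].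
move: xu; rewrite x_end divfK ?gt_eqF ?Nk_gt0 // -tb_E a_last branch_start_l ltr_nat.
lia.
Qed.

Lemma Tp_block (a : 'I_l) g u ta x : Iint p nn a x ->
  branch_start a = (ta * p ^ g)%N -> (ta <= u)%N -> in_block g u x ->
  in_block (g + nn a) (u - ta) (Tp p nn x).
Proof.
move=> Ia ta_E ta_u /andP[ux xu]; rewrite /in_block (Tp_grid Ia) ta_E.
have P_gt0 : 0 < (p ^ nn a)%:R :> R by rewrite ltr0n expp_gt0.
rewrite -subSn // expnD !natrM !natrB ?(leqW ta_u) //.
rewrite !natrM in ux xu; apply/andP; split; nra.
Qed.

Lemma branch_block_le (a : 'I_l) g u ta : (g + nmax <= k)%N ->
  branch_start a = (ta * p ^ g)%N -> in_branch a (u * p ^ g) ->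
  ((u - ta).+1 * p ^ (g + nn a) <= Nk)%N.
Proof.
move=> g_le ta_E /andP[_]; rewrite branch_startS ta_E.
have [c c_E] : exists c, (p ^ (k - nn a) = c * p ^ g)%N.
  exists (p ^ (k - nn a - g))%N; rewrite -expnD subnK //.
  by have := nn_le_nmax a; lia.
rewrite c_E -mulnDl ltn_pmul2r ?expp_gt0 // => u_lt.
rewrite expnD mulnA -(subnK (nn_le_k a)) [X in (_ <= X)%N]expnD c_E.
by rewrite !leq_pmul2r ?expp_gt0 //; lia.
Qed.

Lemma cylw_block s : forall g u (x : R), (g + size s * nmax <= k)%N ->
  (u.+1 * p ^ g <= Nk)%N -> in_block g u x -> (cylw s x <-> cell_cyl s (u * p ^ g)).
Proof.
elim: s => [|a s IH] g u x /= g_le u_le xu.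
  by split => // _; apply: leq_trans u_le; rewrite ltn_pmul2r ?expp_gt0.
have ga_le : (g + nmax <= k)%N by move: g_le; rewrite mulSn; lia.
have Ia_iff := Iint_block a ga_le u_le xu.
suff step : in_branch a (u * p ^ g) ->
    (cylw s (Tp p nn x) <-> cell_cyl s ((u * p ^ g - branch_start a) * p ^ nn a)).
  split => [[/Ia_iff ua /(step ua) ->]|/andP[ua /(step ua) ?]]; first by rewrite ua.
  by split => //; apply/Ia_iff.
move=> ua; have [ta ta_E] := dvdnP (dvdn_branch_start a ga_le).
have ta_u : (ta <= u)%N by move: ua => /andP[]; rewrite ta_E leq_pmul2r ?expp_gt0.
rewrite ta_E -mulnBl -mulnA -expnD; apply: IH.
- by move: g_le; rewrite mulSn; have := nn_le_nmax a; lia.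
- exact: branch_block_le ta_E ua.
- by apply: Tp_block => //; apply/Ia_iff.
Qed.

Lemma cell_cyl_block s g u v : (g + size s * nmax <= k)%N -> (v < p ^ g)%N ->
  cell_cyl s (u * p ^ g + v) = cell_cyl s (u * p ^ g).
Proof.
move=> g_le v_lt; have pg_gt0 := expp_gt0 g.
have [u_le|u_gt] := leqP (u.+1 * p ^ g) Nk; last first.
  have [c c_E] : exists c, Nk = (c * p ^ g)%N.
    by exists (p ^ (k - g))%N; rewrite -expnD subnK //; lia.
  have c_u : (c <= u)%N by move: u_gt; rewrite c_E ltn_pmul2r.
  have Nk_le : (Nk <= u * p ^ g)%N by rewrite c_E leq_mul2r c_u orbT.
  by apply/idP/idP => /cell_cyl_lt; lia.
pose x : R := (u * p ^ g + v)%:R / Nk%:R.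
have xN : x * Nk%:R = (u * p ^ g + v)%:R by rewrite divfK ?gt_eqF ?Nk_gt0.
have x_blk : in_block g u x by rewrite /in_block xN !ler_nat !ltr_nat; lia.
have x_cell : in_block 0 (u * p ^ g + v) x.
  by rewrite /in_block xN expn0 !muln1 lexx ltr_nat ltnSn.
have x_in := cylw_block g_le u_le x_blk.
have cell_le : ((u * p ^ g + v).+1 <= Nk)%N by lia.
have x_in' := @cylw_block s 0 (u * p ^ g + v) x; rewrite expn0 !muln1 in x_in'.
have {}x_in' := x_in' (leq_trans (leq_addl _ _) g_le) cell_le x_cell.
by apply/idP/idP => [/x_in' /x_in | /x_in /x_in'].
Qed.

Lemma cylw_cell s i (x : R) : (size s * nmax <= k)%N -> (i < Nk)%N ->
  i%:R / Nk%:R <= x -> x < i.+1%:R / Nk%:R -> (cylw s x <-> cell_cyl s i).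
Proof.
move=> s_le i_lt ix xi; have := @cylw_block s 0 i x; rewrite expn0 !muln1; apply => //.
by rewrite /in_block !muln1 -ler_pdivrMr ?Nk_gt0 // -ltr_pdivlMr ?Nk_gt0 // ix xi.
Qed.

Lemma EcellE (i : 'I_Nk) :
  Ecell i = [set` `[i%:R / Nk%:R, i.+1%:R / Nk%:R]] :> set R.
Proof. by apply/seteqP; split => x; rewrite /Ecell /= in_itv. Qed.

Lemma cell_integral_cylw s (i : 'I_Nk) : (size s * nmax <= k)%N ->
  Nk%:R * Rintegral lebesgue_measure (Ecell i) (\1_(cylw s)) = (cell_cyl s i)%:R.
Proof.
move=> s_le; set a : R := i%:R / Nk%:R; set b : R := i.+1%:R / Nk%:R.
have ab : a < b by rewrite /a /b ltr_pM2r ?invr_gt0 ?Nk_gt0 // ltr_nat.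
have E_meas : measurable (Ecell i : set R) by rewrite EcellE; apply: measurable_itv.
set B := cylw s `&` (Ecell i : set R).
have -> : Rintegral lebesgue_measure (Ecell i) (\1_(cylw s)) =
          Rintegral lebesgue_measure (Ecell i) (\1_B).
  congr fine; apply: eq_integral => x; rewrite inE => Ex.
  by rewrite !indicE /B in_setI (mem_set Ex) andbT.
have BE : B `&` Ecell i = B by apply: setIidl => x [].
rewrite /Rintegral; have [si|nsi] := boolP (cell_cyl s i).
  have [B_meas B_len] : measurable B /\ lebesgue_measure B = (b - a)%:E.
    apply: lebesgue_measure_between => // x.
      rewrite /= in_itv /= => /andP[ax xb]; split.
        exact/(cylw_cell s_le (ltn_ord i) ax xb).
      by rewrite /Ecell /= ax (ltW xb).
    by move=> [_]; rewrite /Ecell /= in_itv.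
  rewrite integral_indic // BE (_ : fine _ = fine (b - a)%:E); last by congr fine.
  by rewrite /a /b -mulrBl -natrB // subSnn mul1r mulfV // gt_eqF // Nk_gt0.
have [B_meas B_len] : measurable B /\ lebesgue_measure B = 0%E.
  apply: (@lebesgue_measure_sub_set1 _ b) => x [sx]; rewrite /Ecell /= => /andP[ax].
  rewrite le_eqVlt => /orP[/eqP // | xb].
  by exfalso; move/negP: nsi; apply; apply/(cylw_cell s_le (ltn_ord i) ax xb).
by rewrite integral_indic // BE (_ : fine _ = fine 0%E) ?mulr0 //; congr fine.
Qed.

Definition cell_weight (psi : 'cV[R[i]]_Nk) (j : 'I_Nk) : R :=
  complex.Re (conjc (psi j 0) * psi j 0).

Lemma cell_weight_ge0 psi j : 0 <= cell_weight psi j.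
Proof.
by rewrite /cell_weight; case: (psi j 0) => a b /=; rewrite mulNr opprK addr_ge0 ?sqr_ge0.
Qed.

Lemma mu_psiE (psi : 'cV[R[i]]_Nk) (A : set R) : mu_psi psi A =
  \sum_(i < Nk) Nk%:R * Rintegral lebesgue_measure (Ecell i) (\1_A) * cell_weight psi i.
Proof.
rewrite /mu_psi /inner_op raddf_sum; apply: eq_bigr => i _.
rewrite !mxE (bigD1 i) //= big1 ?addr0 => [|j ji]; last first.
  by rewrite !mxE eq_sym (negbTE ji) mul0r.
rewrite !mxE eqxx mulrCA /cell_weight.
by case: (conjc _ * _) => u w /=; rewrite mul0r subr0.
Qed.

Definition cyl_weight (psi : 'cV[R[i]]_Nk) (s : seq 'I_l) : R :=
  \sum_(i < Nk) (cell_cyl s i)%:R * cell_weight psi i.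

Lemma mu_psi_cylw psi s :
  (size s * nmax <= k)%N -> mu_psi psi (cylw s) = cyl_weight psi s.
Proof.
by move=> s_le; rewrite mu_psiE; apply: eq_bigr => i _; rewrite cell_integral_cylw.
Qed.

Lemma cyl_cylw n (e : n.-tuple 'I_l) : cyl p nn e = cylw e.
Proof.
elim: n e => [|n IH] e.
  by rewrite [e]tuple0 /=; apply/seteqP; split => x // _ [].
case: e / tupleP => a e; apply/seteqP; split => x /=.
  move=> xe; split; first by have := xe ord0; rewrite tnth0.
  by rewrite -IH => i; have := xe (lift ord0 i); rewrite tnthS /= -iterS iterSr.
move=> [Ia]; rewrite -IH => xe i; case: (unliftP ord0 i) => [j ->|->].
  by rewrite tnthS /= -iterS iterSr; apply: xe.
by rewrite tnth0.
Qed.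

(* [Tp_covers a j i]: for [E_j] in branch [a], the cell [E_i] lies in [T_p(E_j)]. *)
Definition Tp_covers (a : 'I_l) (j i : nat) : bool :=
  ((j - branch_start a) * p ^ nn a <= i < (j - branch_start a) * p ^ nn a + p ^ nn a)%N.

Lemma Bmat_off_branch (a : 'I_l) (i j : 'I_Nk) :
  in_branch a j -> ~~ Tp_covers a j i -> @Bmat R p l nn Nk j i = 0.
Proof.
move=> ja i_off; rewrite /Bmat; set S := (_ `&` _).
suff -> : (lebesgue_measure S = 0 :> \bar R)%E by rewrite /= mul0r.
apply/countable_lebesgue_measure0/finite_set_countable.
apply: (sub_finite_set _ (finite_set2 (j%:R / Nk%:R : R) (j.+1%:R / Nk%:R))).
move=> x []; rewrite /Ecell /= => /andP[jx xj] /andP[ix xi].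
have [->|x_ne_j1] := eqVneq x (j.+1%:R / Nk%:R); first by right.
have [->|x_ne_j] := eqVneq x (j%:R / Nk%:R); first by left.
exfalso; have P_gt0 : 0 < (p ^ nn a)%:R :> R by rewrite ltr0n expp_gt0.
have jX : j%:R < x * Nk%:R.
  by rewrite -ltr_pdivrMr ?Nk_gt0 // lt_def x_ne_j.
have Xj : x * Nk%:R < j.+1%:R.
  by rewrite -ltr_pdivlMr ?Nk_gt0 // lt_def eq_sym x_ne_j1.
have Ia : Iint p nn a x.
  have := @Iint_block a 0 j x; rewrite add0n expn0 !muln1 => -> //.
  by rewrite /in_block expn0 !muln1 (ltW jX).
move: ix xi; rewrite ler_pdivrMr ?Nk_gt0 // ler_pdivlMr ?Nk_gt0 // (Tp_grid Ia).
move: ja i_off => /andP[aj _]; rewrite /Tp_covers negb_and -ltnNge -leqNgt.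
case/orP => [i_lt|i_ge].
  have : (i.+1%:R : R) <= (j%:R - (branch_start a)%:R) * (p ^ nn a)%:R.
    by rewrite -natrB // -natrM ler_nat.
  nra.
have : (j%:R - (branch_start a)%:R) * (p ^ nn a)%:R + (p ^ nn a)%:R <= (i%:R : R).
  by rewrite -natrB // -natrM -natrD ler_nat.
nra.
Qed.

Lemma quantization_eq0 (U : 'M[R[i]]_Nk) (a : 'I_l) (i j : 'I_Nk) :
  quantization p nn U -> in_branch a j -> ~~ Tp_covers a j i -> U i j = 0.
Proof.
move=> [_ UB] ja i_off; have := UB i j; rewrite (Bmat_off_branch ja i_off) => /eqP.
by rewrite expf_eq0 /= normr_eq0 => /eqP.
Qed.

(* [pre_cyl s j]: the cell [E_j] lies in [T_p^-1] of the cylinder of [s]. *)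
Definition pre_cyl (s : seq 'I_l) (j : nat) : bool :=
  [exists a : 'I_l, cell_cyl (a :: s) j].

Lemma sum_cell_cyl_cons s j :
  \sum_(a < l) (cell_cyl (a :: s) j)%:R = (pre_cyl s j)%:R :> R.
Proof.
rewrite /pre_cyl; case: existsP => [[a ja]|nja]; last first.
  rewrite big1 // => a _; case: (boolP (cell_cyl (a :: s) j)) => // ja.
  by case: nja; exists a.
rewrite (bigD1 a) // ja big1 => [|b ba]; first by rewrite /= addr0.
case: (boolP (cell_cyl (b :: s) j)) => // jb; move: ja jb => /andP[ja _] /andP[jb _].
by move/eqP: ba; case; apply: in_branch_uniq jb ja.
Qed.

(* [|U i j|^2 = B(j,i)], so [U i j != 0] forces [Tp_covers a j i]. *)
Lemma quantization_support (U : 'M[R[i]]_Nk) s (i j : 'I_Nk) :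
  quantization p nn U -> ((size s).+1 * nmax <= k)%N -> U i j != 0 ->
  cell_cyl s i = pre_cyl s j.
Proof.
move=> qU s_le Uij; have [a ja] := in_branch_ex (ltn_ord j).
have -> : pre_cyl s j = cell_cyl (a :: s) j.
  apply/existsP/idP => [[b /[dup] + /andP[jb _]]|]; last by exists a.
  by rewrite (in_branch_uniq jb ja).
rewrite /= ja /=.
have : Tp_covers a j i.
  by apply: contraNT Uij => i_off; rewrite (quantization_eq0 qU ja i_off).
rewrite /Tp_covers => i_on.
rewrite -(cell_cyl_block (g := nn a) _ (v := i - (j - branch_start a) * p ^ nn a)).
- by congr cell_cyl; lia.
- by move: s_le; rewrite mulSn; have := nn_le_nmax a; lia.
- by lia.
Qed.

Lemma Re_normsq_indicator (psi : 'cV[R[i]]_Nk) (b : 'I_Nk -> bool) :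
  complex.Re (normsq (fun i => (b i)%:R * psi i 0)) = \sum_i (b i)%:R * cell_weight psi i.
Proof.
rewrite /normsq raddf_sum; apply: eq_bigr => i _; rewrite rmorphM rmorph_nat.
rewrite mulrACA -natrM mulnb andbb /cell_weight.
by case: (b i); rewrite ?mul1r ?mul0r.
Qed.

Section Stationary.
Variables (U : 'M[R[i]]_Nk) (psi : 'cV[R[i]]_Nk).
Hypothesis qU : quantization p nn U.
Hypothesis psi_eig : exists lam : R[i], U *m psi = lam *: psi.
Hypothesis psi_norm : \sum_(i < Nk) `|psi i 0| ^+ 2 = 1.

Lemma normsq_psi : normsq (fun i => psi i 0) = 1.
Proof. by rewrite -psi_norm; apply: eq_bigr => i _; rewrite sqr_normc mulrC. Qed.

(* [U] maps the restriction of [psi] to [T_p^-1 [s]] onto [lam] times its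
   restriction to [[s]], and [U] is unitary. *)
Lemma sum_cyl_weight_cons s : ((size s).+1 * nmax <= k)%N ->
  \sum_(a < l) cyl_weight psi (a :: s) = cyl_weight psi s.
Proof.
move=> s_le; have [lam U_psi] := psi_eig.
have lam1 := eigenvalue_unimodular qU.1.1 U_psi normsq_psi.
pose phi (j : 'I_Nk) := (pre_cyl s j)%:R * psi j 0.
have U_phi i : \sum_j U i j * phi j = lam * ((cell_cyl s i)%:R * psi i 0).
  have := congr1 (fun M : 'cV[R[i]]_Nk => M i 0) U_psi; rewrite !mxE mulrCA => <-.
  rewrite mulr_sumr; apply: eq_bigr => j _.
  have [->|Uij] := eqVneq (U i j) 0; first by rewrite !mul0r mulr0.
  by rewrite /phi (quantization_support qU s_le Uij); ring.
have := normsq_unitary phi qU.1.1.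
rewrite (_ : normsq _ = normsq (fun i => lam * ((cell_cyl s i)%:R * psi i 0))); last first.
  by apply: eq_bigr => i _; rewrite U_phi.
rewrite normsqZ lam1 mul1r => /(congr1 (@complex.Re R)).
rewrite !Re_normsq_indicator /cyl_weight => ->.
by rewrite exchange_big; apply: eq_bigr => j _; rewrite -mulr_suml sum_cell_cyl_cons.
Qed.

Lemma cyl_weight_nil : cyl_weight psi [::] = 1.
Proof.
rewrite /cyl_weight -Re_normsq_indicator (_ : normsq _ = 1) //.
by rewrite -[RHS]normsq_psi; apply: eq_bigr => i _; rewrite /= ltn_ord mul1r.
Qed.

Lemma sum_cyl_weight_catl m s : ((m + size s) * nmax <= k)%N ->
  sum_words m (fun e => cyl_weight psi (e ++ s)) = cyl_weight psi s.
Proof.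
elim: m => [|m IH] ms_le; first by rewrite sum_words0.
rewrite sum_wordsS /sum_words exchange_big /= -[RHS]IH; last first.
  by apply: leq_trans ms_le; rewrite leq_mul2r leqnSn orbT.
apply: eq_bigr => e _; apply: sum_cyl_weight_cons.
by rewrite size_cat size_tuple -addSn.
Qed.

End Stationary.

Lemma cyl_weight_ge0 psi s : 0 <= cyl_weight psi s.
Proof. by apply: sumr_ge0 => i _; rewrite mulr_ge0 ?cell_weight_ge0. Qed.

Lemma sum_cyl_weight_cat psi s m :
  sum_words m (fun e => cyl_weight psi (s ++ e)) = cyl_weight psi s.
Proof.
rewrite /sum_words /cyl_weight exchange_big /=; apply: eq_bigr => i _.
by rewrite -mulr_suml; move: (sum_cell_cyl_cat m s i); rewrite /sum_words => ->.
Qed.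

Definition vword (s : seq 'I_l) : R := \prod_(a <- s) (Num.sqrt (Lam p nn a))^-1.

Lemma vword_gt0 s : 0 < vword s.
Proof. by apply: prodr_gt0 => a _; rewrite invr_gt0 sqrtr_gt0 /Lam ltr0n expp_gt0. Qed.

Lemma vword_cat s1 s2 : vword (s1 ++ s2) = vword s1 * vword s2.
Proof. by rewrite /vword big_cat. Qed.

Lemma vepsE n (e : n.-tuple 'I_l) : veps p nn e = vword e.
Proof. by rewrite /veps /vword big_tuple. Qed.

Lemma pressureE (psi : 'cV[R[i]]_Nk) m :
  \sum_(i < Nk) `|psi i 0| ^+ 2 = 1 -> (m * nmax <= k)%N ->
  pressure p nn (mu_psi psi) m = word_pressure (cyl_weight psi) vword m.
Proof.
move=> psi_norm m_le; rewrite /pressure; have [->|m_ne0] /= := eqVneq m 0%N.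
  by rewrite word_pressure0 //;
    [apply: vword_gt0 | apply: vword_cat | apply: cyl_weight_nil].
rewrite /word_pressure /sum_words; congr (- _); apply: eq_bigr => e _.
by rewrite cyl_cylw vepsE mu_psi_cylw // size_tuple.
Qed.

Lemma pressure_subadd (U : 'M[R[i]]_Nk) (psi : 'cV[R[i]]_Nk) a b :
  quantization p nn U -> (exists lam : R[i], U *m psi = lam *: psi) ->
  \sum_(i < Nk) `|psi i 0| ^+ 2 = 1 -> ((a + b) * nmax <= k)%N ->
  pressure p nn (mu_psi psi) (a + b) <=
  pressure p nn (mu_psi psi) a + pressure p nn (mu_psi psi) b.
Proof.
move=> qU psi_eig psi_norm ab_le.
rewrite !pressureE // ?(leq_trans _ ab_le) ?leq_mul2r ?leq_addl ?leq_addr ?orbT //.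
apply: word_pressureD; [exact: cyl_weight_ge0 | exact: vword_gt0 | exact: vword_cat |
  exact: cyl_weight_nil | exact: sum_cyl_weight_cat | ].
by move=> s; apply: (sum_cyl_weight_catl qU psi_eig psi_norm); rewrite size_tuple.
Qed.

End Grid.

Lemma Lmax_pow (p l : nat) (nn : 'I_l -> nat) : (0 < p)%N -> (0 < l)%N ->
  Lmax p nn = (p ^ nmax nn)%N.
Proof.
move=> p_gt0 l_gt0; have [j0 j0_max] : {j0 | nmax nn = nn j0}.
  by apply: bigop.eq_bigmax; rewrite card_ord.
rewrite /Lmax j0_max; apply/eqP; rewrite eqn_leq (leq_bigmax (F := fun j => p ^ nn j)%N j0).
by rewrite andbT; apply/bigmax_leqP => j _; rewrite leq_pexp2l // -j0_max leq_bigmax.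
Qed.

Lemma mul_le_of_floor_ln_ratio (R : realType) (p k M m : nat) : (1 < p)%N -> (0 < M)%N ->
  m%:Z = Num.floor (ln ((p ^ k)%N%:R : R) / ln ((p ^ M)%N%:R)) -> (m * M <= k)%N.
Proof.
move=> p_gt1 M_gt0; rewrite !natrX !lnXn ?ltr0n ?(ltn_trans _ p_gt1) //.
have ln_p : 0 < ln (p%:R : R) by rewrite ln_gt0 // ltr1n.
rewrite -!(mulr_natr (ln _)) invfM mulrACA mulfV ?gt_eqF // mul1r => m_E.
have := floor_le (k%:R / M%:R : R); rewrite -m_E ler_pdivlMr ?ltr0n //.
by rewrite -natrM ler_nat.
Qed.

Theorem proposition4 (R : realType) (p l : nat) (nn : 'I_l -> nat)
  (hp : (2 <= p)%N) (hnn : forall j, (1 <= nn j)%N)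
  (hsum : \sum_(j < l) ((p%:R : R) ^- nn j) = 1)
  (k : nat) (U : 'M[R[i]]_(p ^ k)) (hU : quantization p nn U)
  (psi : 'cV[R[i]]_(p ^ k))
  (hpsi_eig : exists lam : R[i], U *m psi = lam *: psi)
  (hpsi_norm : \sum_(i < p ^ k) `|psi i 0| ^+ 2 = 1)
  (q n r : nat) (hq : (1 <= q)%N) (hn : (1 <= n)%N) (hr : (r < n)%N)
  (hE : ((q * n + r)%N)%:Z =
        Num.floor (ln ((p ^ k)%:R : R) / ln ((Lmax p nn)%:R : R))) :
  pressure p nn (mu_psi psi) (q * n + r) <=
  q%:R * pressure p nn (mu_psi psi) n + pressure p nn (mu_psi psi) r.
Proof.
have l_gt0 : (0 < l)%N.
  case: l nn hsum {hnn U hU psi hpsi_eig hpsi_norm hE} => // nn.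
  by rewrite big_ord0 => /eqP; rewrite eq_sym oner_eq0.
have nmax_gt0 : (0 < nmax nn)%N.
  by apply: leq_trans (hnn (Ordinal l_gt0)) _; apply: leq_bigmax.
rewrite (Lmax_pow _ (ltnW hp)) // in hE.
have nE_le := mul_le_of_floor_ln_ratio hp nmax_gt0 hE.
have nmax_le_k : (nmax nn <= k)%N.
  by apply: leq_trans nE_le; rewrite leq_pmull // addn_gt0 muln_gt0 hq hn.
apply: (subadditive_le (N := (q * n + r)%N)) => // a b ab_le.
apply: (pressure_subadd hp hsum nmax_le_k hU hpsi_eig hpsi_norm).
by apply: leq_trans nE_le; rewrite leq_mul2r ab_le orbT.
Qed.
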